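(* Let $i,j\in[s]$ with $i\neq j$. Then there is no homomorphism from $F_i^{\bullet\bullet}$ to $F_j^{\bullet\bullet}$ (both viewed as ordinary digraphs).
   Context: All digraphs are finite and loopless; a tournament is a digraph in which every pair of distinct vertices is joined by exactly one arc. A homomorphism from a digraph $F$ to a digraph $H$ is a map $\varphi:V(F)\to V(H)$ with $(\varphi(u),\varphi(v))\in E(H)$ whenever $(u,v)\in E(F)$. Construction of $F_i^{\bullet\bullet}$: fix $s\in\mathbb{N}^+$, a positive integer $m$, and a tournament $F_0$ on vertex set $[m]$ satisfying: (I) every vertex has out-degree and in-degree at most $2m/3$; (II) there are no disjoint $A_1,A_2\subseteq[m]$ with $|A_1|=|A_2|=\lceil\sqrt m\,\rceil$ such that $(a_1,a_2)$ is an arc for all $a_1\in A_1,a_2\in A_2$; (III) for every $S\subseteq[m]$ with $|S|\ge 2m/13-\sqrt m$, $F_0[S]$ contains a directed cycle. Let $k_1,\dots,k_s$ be integers in the open interval $(2m/3+2,\,5m/6)$ with $k_i>k_{i+1}+1$ for $1\le i<s$. For $i\in[s]$, $F_i^{\bullet\bullet}$ is the digraph on vertex set $[m]\cup\{z_i,w_i\}$ ($z_i,w_i$ two new vertices, called roots) whose arcs are all arcs of $F_0$, together with the arcs $z_i\to v$ and $v\to w_i$ for every $1\le v\le k_i$, and the arcs $u\to z_i$ and $w_i\to u$ for every $k_i<u\le m$. There is no arc between $z_i$ and $w_i$. *)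

From mathcomp Require Import all_boot.
Set Implicit Arguments. Unset Strict Implicit. Unset Printing Implicit Defensive.

(* Vertex i of [m] = {1..m} is represented by the ordinal i-1 : 'I_m. *)

Definition is_tournament (T : finType) (e : rel T) : Prop :=
  (forall x, ~~ e x x) /\ (forall x y, x != y -> e x y (+) e y x).

(* ceil(sqrt m): least c with m <= c^2 (always found in 0..m). *)
Definition ceil_sqrt (m : nat) : nat := find (fun c => m <= c * c) (iota 0 m.+1).

Definition has_dicycle (T : finType) (e : rel T) (S : {set T}) : Prop :=
  exists p : seq T, [/\ p != [::], uniq p, {subset p <= S} & cycle e p].

Definition cond_I (m : nat) (F0 : rel 'I_m) : Prop :=
  forall u : 'I_m, 3 * #|[set v | F0 u v]| <= 2 * m /\ 3 * #|[set v | F0 v u]| <= 2 * m.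

Definition cond_II (m : nat) (F0 : rel 'I_m) : Prop :=
  ~ exists A1 A2 : {set 'I_m},
      [/\ [disjoint A1 & A2], #|A1| = ceil_sqrt m, #|A2| = ceil_sqrt m &
          forall a1 a2, a1 \in A1 -> a2 \in A2 -> F0 a1 a2].

(* Condition (III): |S| >= 2m/13 - sqrt m, i.e. 13|S| + 13 sqrt m >= 2m,
   written exactly in nat as 169 m >= (2m - 13|S|)^2 (truncated subtraction). *)
Definition cond_III (m : nat) (F0 : rel 'I_m) : Prop :=
  forall S : {set 'I_m}, (2 * m - 13 * #|S|) ^ 2 <= 169 * m -> has_dicycle F0 S.

(* Vertex type of F^{bullet bullet}: inl v for v in [m]; inr true = z, inr false = w. *)
Definition Vbb (m : nat) : finType := ('I_m + bool)%type.

Definition Fbb (m : nat) (F0 : rel 'I_m) (k : nat) : rel (Vbb m) :=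
  fun x y =>
    match x, y with
    | inl u, inl v => F0 u v
    | inr true, inl v => v.+1 <= k
    | inl v, inr false => v.+1 <= k
    | inl u, inr true => k < u.+1
    | inr false, inl u => k < u.+1
    | _, _ => false
    end.

Definition is_hom (T1 T2 : finType) (e1 : rel T1) (e2 : rel T2) (phi : T1 -> T2) : Prop :=
  forall x y, e1 x y -> e2 (phi x) (phi y).

(* A homomorphism F_i^{••} -> F_j^{••} is injective on [m], since F_0 is a
   tournament and F_j^{••} is loopless.  No vertex of [m] is sent to a root:
   the in-neighbours of z_j and the out-neighbours of w_j are the m - k_j < m/3
   vertices above k_j, whereas by (I) every vertex of F_0 has more in- and
   out-neighbours than that.  Hence [m] is mapped bijectively onto [m], so the
   image of z_i, which is adjacent to all of [m], is a root.  It is not w_j,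
   as the k_i out-neighbours of z_i do not fit into the m - k_j out-neighbours
   of w_j; and if it is z_j, comparing neighbourhoods gives k_i <= k_j and
   m - k_i <= m - k_j. *)

From mathcomp Require Import all_boot.
From mathcomp Require Import zify.

Set Implicit Arguments.
Unset Strict Implicit.
Unset Printing Implicit Defensive.

Lemma leq_card_into_image (T U R : finType) (f : T -> R) (g : U -> R)
    (A : {set T}) (B : {set U}) :
  {in A &, injective f} -> injective g ->
  (forall x, x \in A -> exists2 y, f x = g y & y \in B) -> #|A| <= #|B|.
Proof.
move=> f_inj g_inj fAgB; rewrite -(card_in_imset f_inj) -(card_imset B g_inj).
apply/subset_leq_card/subsetP => _ /imsetP[x xA ->].
by have [y -> yB] := fAgB x xA; exact: imset_f.
Qed.

Lemma card_ord_lt m k : k <= m -> #|[set y : 'I_m | y < k]| = k.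
Proof.
move=> le_km; have widen_inj : injective (widen_ord le_km).
  by move=> a b /(congr1 val) /= /val_inj.
rewrite -[RHS](card_ord k) -(card_imset _ widen_inj).
apply: eq_card => y; rewrite inE; apply/idP/imsetP => [lt_yk | [x _ ->]].
  by exists (Ordinal lt_yk) => //; apply: val_inj.
exact: (ltn_ord x).
Qed.

Lemma card_ord_ge m k : #|[set y : 'I_m | k <= y]| = m - k.
Proof.
case: (leqP k m) => [le_km | lt_mk]; last first.
  rewrite (eqP (ltnW lt_mk)); apply/eqP; rewrite cards_eq0; apply/eqP/setP => y.
  by rewrite !inE; apply/negbTE; rewrite -ltnNge (ltn_trans (ltn_ord y)).
have := cardsC [set y : 'I_m | k <= y]; rewrite card_ord.
have -> : ~: [set y : 'I_m | k <= y] = [set y : 'I_m | y < k].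
  by apply/setP => y; rewrite !inE -ltnNge.
by rewrite card_ord_lt //; lia.
Qed.

Lemma tournament_card_out_in (T : finType) (e : rel T) x :
  is_tournament e -> #|[set y | e x y]| + #|[set y | e y x]| = #|T|.-1.
Proof.
case=> e_irr e_tour; rewrite -cardsUI.
have -> : [set y | e x y] :&: [set y | e y x] = set0.
  apply/setP => y; rewrite !inE; case: (eqVneq x y) => [<-|ne_xy].
    by rewrite (negbTE (e_irr x)).
  by have := e_tour _ _ ne_xy; case: (e x y); case: (e y x).
have -> : [set y | e x y] :|: [set y | e y x] = [set~ x].
  apply/setP => y; rewrite !inE eq_sym; case: (eqVneq x y) => [<-|ne_xy].
    by rewrite (negbTE (e_irr x)).
  by have := e_tour _ _ ne_xy; case: (e x y); case: (e y x).
by rewrite cards0 addn0 cardsC1.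
Qed.

Lemma is_hom_neq (T1 T2 : finType) (e1 : rel T1) (e2 : rel T2) (phi : T1 -> T2) :
  (forall y, ~~ e2 y y) -> is_hom e1 e2 phi -> forall x y, e1 x y -> phi x != phi y.
Proof.
move=> e2_irr phi_hom x y /phi_hom; apply: contraTneq => ->; exact: e2_irr.
Qed.

Lemma tournament_hom_inj (T1 T2 : finType) (e1 : rel T1) (e2 : rel T2) (phi : T1 -> T2) :
  is_tournament e1 -> (forall y, ~~ e2 y y) -> is_hom e1 e2 phi -> injective phi.
Proof.
move=> [_ e1_tour] e2_irr phi_hom x y eq_phi; apply/eqP; apply: contraT => ne_xy.
have := e1_tour _ _ ne_xy; case: (boolP (e1 x y)) => [e_xy _ | _ /= e_yx].
  by have := is_hom_neq e2_irr phi_hom e_xy; rewrite eq_phi eqxx.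
by have := is_hom_neq e2_irr phi_hom e_yx; rewrite eq_phi eqxx.
Qed.

Lemma homo_ltn_interval (f : nat -> nat) (s : nat) :
  (forall i, 1 <= i < s -> f i.+1 < f i) ->
  forall i j, 1 <= i -> i < j -> j <= s -> f j < f i.
Proof.
move=> f_dec i j i_ge1 lt_ij j_les.
apply: (@homo_ltn_in _ [pred n | 1 <= n <= s] f (fun a b => b < a)) => //=.
- by move=> b a c lt_ba lt_cb; exact: ltn_trans lt_cb lt_ba.
- move=> a b; rewrite !inE => /andP[a1 _] /andP[_ bs] n /andP[lt_an lt_nb].
  by rewrite inE; apply/andP; split; lia.
- move=> n; rewrite !inE => /andP[n1 _] /andP[_ ns].
  by apply: f_dec; apply/andP; split; lia.
- by rewrite inE i_ge1; lia.
- by rewrite inE j_les; lia.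
Qed.

Section Fbb_neighbourhoods.
Variables (m : nat) (F0 : rel 'I_m) (k : nat).

Lemma Fbb_loopless : (forall u, ~~ F0 u u) -> forall x, ~~ Fbb F0 k x x.
Proof. by move=> F0_irr [u|[]] //=; exact: F0_irr. Qed.

Lemma Fbb_z_out x : Fbb F0 k (inr true) x -> exists2 y, x = inl y & y < k.
Proof. by case: x => [y|[]] //= lt_yk; exists y. Qed.

Lemma Fbb_z_in x : Fbb F0 k x (inr true) -> exists2 y, x = inl y & k <= y.
Proof. by case: x => [y|[]] //= lt_ky; exists y. Qed.

Lemma Fbb_w_out x : Fbb F0 k (inr false) x -> exists2 y, x = inl y & k <= y.
Proof. by case: x => [y|[]] //= lt_ky; exists y. Qed.

End Fbb_neighbourhoods.

Section Fbb_homomorphism.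
Variables (m : nat) (F0 : rel 'I_m) (ki kj : nat) (phi : Vbb m -> Vbb m).
Hypotheses (F0_tournament : is_tournament F0) (F0_degrees : cond_I F0)
           (kj_large : 2 * m + 3 < 3 * kj) (kj_le_m : kj <= m)
           (phi_hom : is_hom (Fbb F0 ki) (Fbb F0 kj) phi).

Let Fbb_kj_loopless := Fbb_loopless kj F0_tournament.1.

Lemma Fbb_hom_card_inner (A B : {set 'I_m}) :
  (forall v, v \in A -> exists2 y, phi (inl v) = inl y & y \in B) -> #|A| <= #|B|.
Proof.
apply: (leq_card_into_image _ (@inl_inj 'I_m bool)) => u v _ _.
apply: (tournament_hom_inj F0_tournament Fbb_kj_loopless (phi := phi \o inl)).
by move=> {}u {}v; exact: (@phi_hom (inl u) (inl v)).
Qed.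

Lemma Fbb_hom_inner (a : 'I_m) : exists y, phi (inl a) = inl y.
Proof.
case E: (phi (inl a)) => [y|b]; first by exists y.
have [out_a in_a] := F0_degrees a; have a_lt_m := ltn_ord a.
have deg_a := tournament_card_out_in a F0_tournament; rewrite card_ord in deg_a.
case: b E => E; exfalso.
- have : #|[set v | F0 v a]| <= #|[set y : 'I_m | kj <= y]|.
    apply: Fbb_hom_card_inner => v; rewrite inE => /(@phi_hom (inl v) (inl a)).
    by rewrite E => /Fbb_z_in[y -> le_y]; exists y; rewrite ?inE.
  rewrite card_ord_ge; lia.
- have : #|[set v | F0 a v]| <= #|[set y : 'I_m | kj <= y]|.
    apply: Fbb_hom_card_inner => v; rewrite inE => /(@phi_hom (inl a) (inl v)).
    by rewrite E => /Fbb_w_out[y -> le_y]; exists y; rewrite ?inE.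
  rewrite card_ord_ge; lia.
Qed.

Lemma Fbb_hom_z_root : exists b, phi (inr true) = inr b.
Proof.
case E: (phi (inr true)) => [x|b]; last by exists b.
have : #|[set: 'I_m]| <= #|[set~ x]|.
  apply: Fbb_hom_card_inner => v _; have [y phi_v] := Fbb_hom_inner v.
  exists y => //; rewrite !inE -(inj_eq (@inl_inj _ bool)) -phi_v -E.
  case: (ltnP v ki) => [z_v | v_z].
    by rewrite eq_sym; apply: (is_hom_neq Fbb_kj_loopless phi_hom); exact: z_v.
  by apply: (is_hom_neq Fbb_kj_loopless phi_hom); exact: v_z.
by rewrite cardsT cardsC1 card_ord; have := ltn_ord x; lia.
Qed.

Lemma Fbb_hom_z_to_z : ki <= m -> phi (inr true) = inr true -> ki = kj.
Proof.
move=> ki_le_m E.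
have lower : #|[set v : 'I_m | v < ki]| <= #|[set y : 'I_m | y < kj]|.
  apply: Fbb_hom_card_inner => v; rewrite inE => /(@phi_hom (inr true) (inl v)).
  by rewrite E => /Fbb_z_out[y -> lt_y]; exists y; rewrite ?inE.
have upper : #|[set v : 'I_m | ki <= v]| <= #|[set y : 'I_m | kj <= y]|.
  apply: Fbb_hom_card_inner => v; rewrite inE -ltnS => /(@phi_hom (inl v) (inr true)).
  by rewrite E => /Fbb_z_in[y -> le_y]; exists y; rewrite ?inE.
by move: lower upper; rewrite !card_ord_lt // !card_ord_ge; lia.
Qed.

Lemma Fbb_hom_z_not_to_w : ki <= m -> m < ki + kj -> phi (inr true) != inr false.
Proof.
move=> ki_le_m ki_kj_large; apply/eqP => E.
have : #|[set v : 'I_m | v < ki]| <= #|[set y : 'I_m | kj <= y]|.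
  apply: Fbb_hom_card_inner => v; rewrite inE => /(@phi_hom (inr true) (inl v)).
  by rewrite E => /Fbb_w_out[y -> le_y]; exists y; rewrite ?inE.
by rewrite card_ord_lt // card_ord_ge; lia.
Qed.

Lemma Fbb_hom_eq_k : ki <= m -> m < ki + kj -> ki = kj.
Proof.
move=> ki_le_m ki_kj_large; have [[] E] := Fbb_hom_z_root.
  exact: Fbb_hom_z_to_z.
by have := Fbb_hom_z_not_to_w ki_le_m ki_kj_large; rewrite E eqxx.
Qed.

End Fbb_homomorphism.

Theorem claim4p5 (s m : nat) (F0 : rel 'I_m) (k : nat -> nat) :
  0 < s -> 0 < m ->
  is_tournament F0 -> cond_I F0 -> cond_II F0 -> cond_III F0 ->
  (forall i, 1 <= i <= s -> 2 * m + 6 < 3 * k i /\ 6 * k i < 5 * m) ->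
  (forall i, 1 <= i < s -> (k i.+1).+1 < k i) ->
  forall i j, 1 <= i <= s -> 1 <= j <= s -> i != j ->
  ~ exists phi : Vbb m -> Vbb m, is_hom (Fbb F0 (k i)) (Fbb F0 (k j)) phi.
Proof.
move=> _ _ F0_tournament F0_degrees _ _ k_bounds k_dec i j i_s j_s ne_ij [phi phi_hom].
have [ki_large ki_small] := k_bounds i i_s.
have [kj_large kj_small] := k_bounds j j_s.
have k_strict : forall a b, 1 <= a -> a < b -> b <= s -> k b < k a.
  by apply: homo_ltn_interval => a a_s; have := k_dec a a_s; lia.
have ne_k : k i != k j.
  case/andP: i_s => i_ge1 i_le_s; case/andP: j_s => j_ge1 j_le_s.
  by case: (ltngtP i j) ne_ij => // [lt_ij | lt_ji] _;
    [have := k_strict i j | have := k_strict j i]; lia.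
apply/(negP ne_k)/eqP; apply: (Fbb_hom_eq_k F0_tournament F0_degrees _ _ phi_hom); lia.
Qed.
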